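(* Let $a<b$ and let $X$ be a random variable taking values in $[a,b]$, with probability density function $f:[a,b]\rightarrow[0,1]$ and cumulative distribution function $F(x)=\Pr(X\le x)=\int_a^x f(t)\,dt$. Assume that $F$ is differentiable in $(a,b)$ with $F'=f\in L^1[a,b]$ and that $\gamma\le f(t)\le\Gamma$ for all $t\in[a,b]$, where $\gamma,\Gamma$ are real constants. Then \[ \left|\frac{1}{2}\left[F\left(\frac{3a+b}{4}\right)+F\left(\frac{a+3b}{4}\right)\right]-\frac{b-E(X)}{b-a}\right|\leq \frac{b-a}{4} \left(\frac{1}{b-a}-\gamma\right) \] and \[ \left|\frac{1}{2}\left[F\left(\frac{3a+b}{4}\right)+F\left(\frac{a+3b}{4}\right)\right]-\frac{b-E(X)}{b-a}\right|\leq \frac{b-a}{4} \left(\Gamma-\frac{1}{b-a}\right), \] where $E(X)$ is the expectation of $X$. *)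

From HB Require Import structures.
From mathcomp Require Import all_boot all_order all_algebra.
From mathcomp Require Import all_classical all_reals all_analysis.
Set Implicit Arguments. Unset Strict Implicit. Unset Printing Implicit Defensive.
Import Order.TTheory GRing.Theory Num.Theory.
Local Open Scope ring_scope.

Definition cdfR d (T : measurableType d) (R : realType) (P : probability T R)
  (X : {RV P >-> R}) (x : R) : R := fine (cdf X x).

(* Since f is a density bounded by gam and Gam, the distribution
   function F has difference quotients between gam and Gam on [a, b], and
   E(X) = b - int_a^b F.  Cut [a, b] into four cells of length w = (b - a)/4;
   on each cell F lies between the two lines of slopes gam and Gam through
   either endpoint, so its mean over the cell is pinned down by the values of
   F at the nodes up to multiples of gam w and Gam w.  Adding the four cells,
   with F(a) = 0 and F(b) = 1, is linear arithmetic and gives both bounds. *)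

From HB Require Import structures.
From mathcomp Require Import all_boot all_order all_algebra.
From mathcomp Require Import all_classical all_reals all_analysis measurable_realfun.
From mathcomp Require Import ring lra.
Set Implicit Arguments. Unset Strict Implicit. Unset Printing Implicit Defensive.
Import Order.TTheory GRing.Theory Num.Theory.
Import numFieldNormedType.Exports.
Local Open Scope classical_set_scope.
Local Open Scope ring_scope.

Section two_point_quadrature.
Context {R : realType}.
Notation mu := (@lebesgue_measure R).

Lemma integrable_affine (u v c0 c1 : R) :
  mu.-integrable `[u, v] (EFin \o (fun r => c0 + c1 * (r - u))).
Proof.
have -> : (fun r => c0 + c1 * (r - u)) =
    (fun r : R => ((c0 - c1 * u)%:P + c1 *: 'X : {poly R}).[r]).
  by apply/funext => r; rewrite !hornerE; ring.
apply: continuous_compact_integrable; first exact: segment_compact.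
by apply: continuous_in_subspaceT => x _; exact: continuous_horner.
Qed.

Lemma integrable_itv_cst (u v k : R) : mu.-integrable `[u, v] (EFin \o cst k).
Proof.
apply: continuous_compact_integrable; first exact: segment_compact.
exact/continuous_subspaceT/cst_continuous.
Qed.

Lemma integrable_itv_nondecreasing (h : R -> R) (u v : R) :
  {homo h : x y / x <= y} -> mu.-integrable `[u, v] (EFin \o h).
Proof.
move=> hnd; apply: measurable_bounded_integrable => //.
- exact/compact_finite_measure/segment_compact.
- exact: nondecreasing_measurable.
- exists (`|h u| + `|h v|); split => // M hM x /=; rewrite in_itv /= => /andP[ux xv].
  rewrite (le_trans _ (ltW hM)) // ler_norml.
  have := hnd _ _ ux; have := hnd _ _ xv; have := ler_norm (h v).
  have := ler_norm (- h u); rewrite normrN.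
  have := normr_ge0 (h u); have := normr_ge0 (h v); lra.
Qed.

Lemma integrable_subitv (h : R -> R) (u x y v : R) : u <= x -> y <= v ->
  mu.-integrable `[u, v] (EFin \o h) -> mu.-integrable `[x, y] (EFin \o h).
Proof.
move=> ux yv; apply: integrableS => // t /=; rewrite !in_itv /=.
by case/andP => xt ty; rewrite (le_trans ux xt) (le_trans ty yv).
Qed.

Lemma Rintegral_affine (u v c0 c1 : R) : u < v ->
  \int[mu]_(r in `[u, v]) (c0 + c1 * (r - u)) =
  c0 * (v - u) + c1 * (v - u) ^+ 2 / 2.
Proof.
move=> uv; pose p : {poly R} := (c0 - c1 * u) *: 'X + (c1 / 2) *: 'X^2.
have p'E r : (p^`()).[r] = c0 + c1 * (r - u).
  by rewrite /p !poly.derivE !hornerE /=; field.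
rewrite /Rintegral.
under eq_integral => r _ do rewrite -p'E.
rewrite (@continuous_FTC2 _ (fun x => (p^`()).[x]) (fun x => p.[x])) //.
- by rewrite -EFinB /= /p !hornerE /=; field.
- by apply: continuous_in_subspaceT => x _; exact: continuous_horner.
- split.
  + by move=> x _; exact: derivable_horner.
  + exact/cvg_at_right_filter/continuous_horner.
  + exact/cvg_at_left_filter/continuous_horner.
- by move=> x _; rewrite derivE.
Qed.

Lemma Rintegral_itv_cst (u v k : R) : u <= v ->
  \int[mu]_(t in `[u, v]) k = k * (v - u).
Proof.
move=> uv; rewrite Rintegral_cst; last exact: measurable_itv.
congr (_ * _); rewrite [X in fine X](lebesgue_measure_itv `[u, v]) /= lte_fin.
by case: ltgtP uv => // ->; rewrite subrr.
Qed.

Lemma Rintegral_itv_split (h : R -> R) (u x v : R) : u <= x -> x <= v ->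
  mu.-integrable `[u, v] (EFin \o h) ->
  \int[mu]_(t in `[u, v]) h t =
  \int[mu]_(t in `[u, x]) h t + \int[mu]_(t in `[x, v]) h t.
Proof.
move=> ux xv ih.
have := Rintegral_itvB ih; move=> /(_ x); rewrite !bnd_simp => /(_ ux xv).
rewrite Rintegral_itv_obnd_cbnd; first by move=> <-; rewrite addrC subrK.
apply: integrableS ih => // t /=; rewrite !in_itv /= => /andP[xt ->].
by rewrite (le_trans ux) ?ltW.
Qed.

Lemma Rintegral_ge_affine (h : R -> R) (u v c0 c1 : R) : u < v ->
  mu.-integrable `[u, v] (EFin \o h) ->
  (forall r, u <= r <= v -> c0 + c1 * (r - u) <= h r) ->
  c0 * (v - u) + c1 * (v - u) ^+ 2 / 2 <= \int[mu]_(r in `[u, v]) h r.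
Proof.
move=> uv ih hge; rewrite -Rintegral_affine //.
by apply: le_Rintegral => //; exact: integrable_affine.
Qed.

Lemma Rintegral_le_affine (h : R -> R) (u v c0 c1 : R) : u < v ->
  mu.-integrable `[u, v] (EFin \o h) ->
  (forall r, u <= r <= v -> h r <= c0 + c1 * (r - u)) ->
  \int[mu]_(r in `[u, v]) h r <= c0 * (v - u) + c1 * (v - u) ^+ 2 / 2.
Proof.
move=> uv ih hle; rewrite -Rintegral_affine //.
by apply: le_Rintegral => //; exact: integrable_affine.
Qed.

Definition slopes_within (lo hi : R) (F : R -> R) (u v : R) :=
  forall x y, u <= x -> x <= y -> y <= v ->
    lo * (y - x) <= F y - F x <= hi * (y - x).

Lemma slopes_within_subitv (lo hi : R) (F : R -> R) (u x y v : R) :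
  u <= x -> y <= v -> slopes_within lo hi F u v -> slopes_within lo hi F x y.
Proof.
move=> ux yv sF s t xs st ty.
by apply: sF => //; [exact: le_trans xs | exact: le_trans yv].
Qed.

Lemma slopes_within_Rintegral (f F : R -> R) (gam Gam a b : R) :
  mu.-integrable `[a, b] (EFin \o f) ->
  (forall t, a <= t <= b -> gam <= f t <= Gam) ->
  (forall x, a <= x <= b -> F x = \int[mu]_(t in `[a, x]) f t) ->
  slopes_within gam Gam F a b.
Proof.
move=> iF fbd FE x y ax xy yb.
have [ay xb] : a <= y /\ x <= b by split; [exact: le_trans xy | exact: le_trans yb].
have -> : F y - F x = \int[mu]_(t in `[x, y]) f t.
  rewrite !FE ?ax ?ay ?xb ?yb // (@Rintegral_itv_split _ a x y) //; first ring.
  exact: integrable_subitv iF.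
have iF' : mu.-integrable `[x, y] (EFin \o f) by exact: integrable_subitv iF.
have fxy t : [set` `[x, y]] t -> gam <= f t <= Gam.
  rewrite /= in_itv /= => /andP[xt ty].
  by apply: fbd; rewrite (le_trans ax xt) (le_trans ty yb).
rewrite -!Rintegral_itv_cst //; apply/andP; split.
- by apply: le_Rintegral => //; [exact: integrable_itv_cst | move=> t /fxy /andP[]].
- by apply: le_Rintegral => //; [exact: integrable_itv_cst | move=> t /fxy /andP[]].
Qed.

Lemma slopes_within_shift (lo hi : R) (F : R -> R) (a b : R) :
  slopes_within lo hi F a b -> slopes_within lo hi (fun r => F (a + r)) 0 (b - a).
Proof.
move=> sF x y x0 xy yba; have -> : y - x = (a + y) - (a + x) by ring.
by apply: sF; lra.
Qed.

(* The bounds satisfied by the mean [J] over a cell of a function with values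
   [Fu], [Fv] at its ends and slopes between [lo] and [hi] divided by the cell
   length. *)
Definition avg_bounds (lo hi Fu Fv J : R) :=
  [/\ Fu + lo / 2 <= J, J <= Fu + hi / 2, Fv - hi / 2 <= J & J <= Fv - lo / 2].

Lemma Rintegral_slopes_within (lo hi : R) (F : R -> R) (u v : R) : u < v ->
  mu.-integrable `[u, v] (EFin \o F) -> slopes_within lo hi F u v ->
  avg_bounds (lo * (v - u)) (hi * (v - u)) (F u) (F v)
    ((\int[mu]_(r in `[u, v]) F r) / (v - u)).
Proof.
move=> uv iF sF; have vu0 : 0 < v - u by rewrite subr_gt0.
have sFu r : u <= r <= v -> lo * (r - u) <= F r - F u <= hi * (r - u).
  by case/andP => ur rv; exact: sF.
have sFv r : u <= r <= v -> lo * (v - r) <= F v - F r <= hi * (v - r).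
  by case/andP => ur rv; exact: sF.
have leftE c : (F u + c * (v - u) / 2) * (v - u) =
    F u * (v - u) + c * (v - u) ^+ 2 / 2 by ring.
have rightE c : (F v - c * (v - u) / 2) * (v - u) =
    (F v - c * (v - u)) * (v - u) + c * (v - u) ^+ 2 / 2 by field.
split.
- rewrite ler_pdivlMr // leftE; apply: Rintegral_ge_affine => // r /sFu; lra.
- rewrite ler_pdivrMr // leftE; apply: Rintegral_le_affine => // r /sFu; lra.
- rewrite ler_pdivlMr // rightE; apply: Rintegral_ge_affine => // r /sFv; lra.
- rewrite ler_pdivrMr // rightE; apply: Rintegral_le_affine => // r /sFv; lra.
Qed.

Lemma avg_bounds_two_point {g G F1 F2 F3 J1 J2 J3 J4 : R} :
  avg_bounds g G 0 F1 J1 -> avg_bounds g G F1 F2 J2 ->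
  avg_bounds g G F2 F3 J3 -> avg_bounds g G F3 1 J4 ->
  `|(F1 + F3) / 2 - (J1 + J2 + J3 + J4) / 4| <= 1 / 4 - g /\
  `|(F1 + F3) / 2 - (J1 + J2 + J3 + J4) / 4| <= G - 1 / 4.
Proof.
move=> [? ? ? ?] [? ? ? ?] [? ? ? ?] [? ? ? ?].
by rewrite !ler_norml; split; apply/andP; split; lra.
Qed.

Lemma two_point_quadrature_error (gam Gam : R) (F : R -> R) (a b : R) :
  a < b -> mu.-integrable `[a, b] (EFin \o F) -> slopes_within gam Gam F a b ->
  F a = 0 -> F b = 1 ->
  let err := (F ((3 * a + b) / 4) + F ((a + 3 * b) / 4)) / 2
             - (\int[mu]_(t in `[a, b]) F t) / (b - a) in
  `|err| <= (b - a) / 4 * (1 / (b - a) - gam) /\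
  `|err| <= (b - a) / 4 * (Gam - 1 / (b - a)).
Proof.
move=> ab iF sF Fa Fb err; set w := (b - a) / 4.
have w0 : 0 < w by rewrite divr_gt0 // subr_gt0.
pose avg u := (\int[mu]_(t in `[u, u + w]) F t) / w.
have piece u : a <= u -> u + w <= b ->
    avg_bounds (gam * w) (Gam * w) (F u) (F (u + w)) (avg u).
  move=> au uwb; have := @Rintegral_slopes_within gam Gam F u (u + w).
  rewrite /avg (_ : u + w - u = w); last by ring.
  apply; first by rewrite ltrDl.
  - exact: integrable_subitv iF.
  - exact: slopes_within_subitv sF.
have x4E : a + w + w + w + w = b by rewrite /w; field.
have [le1 le2 le3] : [/\ a <= a + w, a + w <= a + w + w & a + w + w <= a + w + w + w].
  by split; lra.
have [le1b le2b le3b] : [/\ a + w <= b, a + w + w <= b & a + w + w + w <= b].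
  by split; lra.
have avgE : (\int[mu]_(t in `[a, b]) F t) / (b - a) =
    (avg a + avg (a + w) + avg (a + w + w) + avg (a + w + w + w)) / 4.
  have iF' u v : a <= u -> v <= b -> mu.-integrable `[u, v] (EFin \o F).
    by move=> au vb; exact: integrable_subitv iF.
  rewrite /avg x4E (@Rintegral_itv_split _ a (a + w)) ?iF' //.
  rewrite (@Rintegral_itv_split _ (a + w) (a + w + w)) ?iF' ?(le_trans le1) //.
  rewrite (@Rintegral_itv_split _ (a + w + w) (a + w + w + w)) ?iF' //;
    last by rewrite (le_trans le1) ?(le_trans le2).
  have -> : b - a = 4 * w by rewrite /w; field.
  by field; rewrite gt_eqF.
have := piece a (lexx a) le1b; rewrite Fa => P1.
have := piece (a + w + w + w) (le_trans le1 (le_trans le2 le3)); rewrite x4E Fb.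
move=> /(_ (lexx b)) P4.
rewrite /err avgE.
have -> : (3 * a + b) / 4 = a + w by rewrite /w; field.
have -> : (a + 3 * b) / 4 = a + w + w + w by rewrite /w; field.
have -> : (b - a) / 4 * (1 / (b - a) - gam) = 1 / 4 - gam * w.
  by rewrite /w; field; rewrite subr_eq0 gt_eqF.
have -> : (b - a) / 4 * (Gam - 1 / (b - a)) = Gam * w - 1 / 4.
  by rewrite /w; field; rewrite subr_eq0 gt_eqF.
exact: avg_bounds_two_point P1 (piece (a + w) le1 le2b)
  (piece (a + w + w) (le_trans le1 le2) le3b) P4.
Qed.

End two_point_quadrature.

Section bounded_expectation.
Context d (T : measurableType d) (R : realType) (P : probability T R).
Notation mu := (@lebesgue_measure R).

Lemma cdfRE (X : {RV P >-> R}) (x : R) : cdf X x = (cdfR X x)%:E.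
Proof. by rewrite /cdfR fineK // fin_num_measure. Qed.

Lemma cdfR_nondecreasing (X : {RV P >-> R}) : {homo cdfR X : x y / x <= y}.
Proof. by move=> x y xy; rewrite -lee_fin -!cdfRE; exact: cdf_nondecreasing. Qed.

Lemma cdfR_eq1 (X : {RV P >-> R}) (b x : R) :
  (forall w, X w <= b) -> b <= x -> cdfR X x = 1.
Proof.
move=> Xb bx; apply/EFin_inj; rewrite -cdfRE /cdf /distribution /pushforward /=.
rewrite (_ : _ @^-1` _ = setT) ?probability_setT //.
by apply/seteqP; split => // w _ /=; rewrite in_itv /= (le_trans (Xb w)).
Qed.

Lemma ge0_bounded_expectation (Y : {RV P >-> R}) (c : R) : 0 <= c ->
  (forall w, 0 <= Y w <= c) ->
  ('E_P[Y] = (c - \int[mu]_(r in `[0, c]) cdfR Y r)%:E)%E.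
Proof.
move=> c0 Ybd; have Y0 w : 0 <= Y w by case/andP: (Ybd w).
rewrite ge0_expectation_ccdf // (@itv_bndbnd_setU _ _ _ (BRight c)) ?bnd_simp //.
rewrite ge0_integral_setU //=; last 2 first.
- exact: measurable_funS (ccdf_measurable _).
- rewrite disj_set2E; apply/eqP/seteqP; split => // z /= [].
  by rewrite !in_itv /= andbT => /andP[_ zc] cz; lra.
rewrite [X in (_ + X)%E]integral0_eq ?adde0; last first.
  move=> r /=; rewrite in_itv /= andbT => cr.
  rewrite ccdf_1_cdf cdfRE (@cdfR_eq1 _ c) ?subee ?ltW // => w.
  by case/andP: (Ybd w).
under eq_integral => r _ do rewrite ccdf_1_cdf cdfRE -EFinB.
have iF := integrable_itv_nondecreasing 0 c (cdfR_nondecreasing Y).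
have i1F : mu.-integrable `[0, c] (EFin \o (fun r => 1 - cdfR Y r)).
  exact: integrableB (integrable_itv_cst 0 c 1) iF.
rewrite -[LHS](fineK (integrable_fin_num _ i1F)) //; congr EFin.
rewrite -[fine _]/(\int[mu]_(r in `[0, c]) (1 - cdfR Y r)).
by rewrite RintegralB ?Rintegral_itv_cst ?mul1r ?subr0 //; exact: integrable_itv_cst.
Qed.

Lemma bounded_Lfun1 (X : {RV P >-> R}) (a b : R) :
  (forall w, a <= X w <= b) -> (X : T -> R) \in Lfun P 1.
Proof.
move=> Xab; apply/Lfun1_integrable/measurable_bounded_integrable => //.
- exact: (le_lt_trans (probability_le1 _ measurableT) (ltry _)).
- exists (`|a| + `|b|); split => // M hM w _ /=.
  rewrite (le_trans _ (ltW hM)) // ler_norml; have /andP[aX Xb] := Xab w.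
  have := ler_norm b; have := ler_norm (- a); rewrite normrN.
  have := normr_ge0 a; have := normr_ge0 b; lra.
Qed.

Lemma bounded_expectation (X : {RV P >-> R}) (a b : R) : a <= b ->
  (forall w, a <= X w <= b) ->
  fine 'E_P[X] = b - \int[mu]_(r in `[0, b - a]) cdfR X (a + r).
Proof.
move=> ab Xab; have LX : (X : T -> R) \in Lfun P 1 by exact: bounded_Lfun1 Xab.
pose Y : {RV P >-> R} := (X : {mfun T >-> R}) - cst a.
have cdfRY r : cdfR Y r = cdfR X (a + r).
  rewrite /cdfR /cdf /distribution /pushforward; congr (fine (P _)).
  by apply/seteqP; split => w /=; rewrite !in_itv /= lerBlDl.
have EY : ('E_P[Y] = 'E_P[X] - a%:E)%E.
  by rewrite [LHS]expectationB ?expectation_cst //; exact: Lfun_cst.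
rewrite (@ge0_bounded_expectation Y (b - a)) ?subr_ge0 // in EY; last first.
  by move=> w; rewrite /Y /= subr_ge0 lerBlDl addrC subrK; exact: Xab.
apply/EFin_inj; rewrite fineK ?expectation_fin_num //.
have -> : ('E_P[X] = 'E_P[X] - a%:E + a%:E)%E by rewrite subeK.
rewrite -EY -EFinD; congr EFin; under eq_Rintegral => r _ do rewrite cdfRY.
by rewrite addrAC subrK.
Qed.

End bounded_expectation.

Theorem corollary4p1 (R : realType) (d : measure_display) (T : measurableType d)
  (P : probability T R) (X : {RV P >-> R}) (f : R -> R) (a b gam Gam : R) :
  a < b ->
  (forall w, a <= X w <= b) ->
  (forall t, a <= t <= b -> 0 <= f t <= 1) ->
  (lebesgue_measure).-integrable `[a, b] (EFin \o f) ->
  (forall x, a <= x <= b ->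
     cdf X x = (\int[lebesgue_measure]_(t in `[a, x]) (f t)%:E)%E) ->
  (forall t, a < t < b -> derivable (cdfR X) t 1 /\ derive1 (cdfR X) t = f t) ->
  (forall t, a <= t <= b -> gam <= f t <= Gam) ->
  `| (cdfR X ((3 * a + b) / 4) + cdfR X ((a + 3 * b) / 4)) / 2
      - (b - fine 'E_P[X]) / (b - a) | <= (b - a) / 4 * (1 / (b - a) - gam)
  /\
  `| (cdfR X ((3 * a + b) / 4) + cdfR X ((a + 3 * b) / 4)) / 2
      - (b - fine 'E_P[X]) / (b - a) | <= (b - a) / 4 * (Gam - 1 / (b - a)).
Proof.
move=> ab Xab _ intf cdfE _ fbd.
have FE x : a <= x <= b -> cdfR X x = \int[lebesgue_measure]_(t in `[a, x]) f t.
  by move=> /cdfE; rewrite /cdfR => ->.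
have Fa : cdfR X a = 0 by rewrite FE ?lexx ?ltW // set_itv1 Rintegral_set1.
have Fb : cdfR X b = 1 by apply: cdfR_eq1 => // w; case/andP: (Xab w).
pose G r := cdfR X (a + r).
have iG : lebesgue_measure.-integrable `[0, b - a] (EFin \o G).
  by apply: integrable_itv_nondecreasing => x y xy; apply: cdfR_nondecreasing; rewrite lerD2l.
have sG : slopes_within gam Gam G 0 (b - a).
  exact/slopes_within_shift/(slopes_within_Rintegral intf fbd FE).
have G0 : G 0 = 0 by rewrite /G addr0.
have G1 : G (b - a) = 1 by rewrite /G addrC subrK.
have EE : b - fine 'E_P[X] = \int[lebesgue_measure]_(r in `[0, b - a]) G r.
  by rewrite (bounded_expectation (ltW ab) Xab) opprB addrC subrK.
have ba0 : 0 < b - a by rewrite subr_gt0.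
have := two_point_quadrature_error ba0 iG sG G0 G1.
rewrite /G /= EE subr0.
have -> : a + (3 * 0 + (b - a)) / 4 = (3 * a + b) / 4 by field.
by have -> : a + (0 + 3 * (b - a)) / 4 = (a + 3 * b) / 4 by field.
Qed.
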